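(* Let $A\in\mathbb{R}^{n\times n}$ and $C\in\mathbb{R}^{1\times n}$. Suppose there exist two eigenvalues $\lambda_p,\lambda_q$ of $A$ belonging to two different Jordan blocks of the Jordan form of $A$ and a positive integer $h$ such that $\lambda_p^h=\lambda_q^h$. Then for any $l\in\mathbb{N}$ and any positive integers $r_1,\ldots,r_l$, setting $t_i=r_ih$, the matrix with rows $CA^{t_1},\ldots,CA^{t_l}$ has rank less than $n$.
   Context: Setting: discrete-time single-output system $x(t+1)=Ax(t)+Bu(t)$, $y(t)=Cx(t)+Du(t)$ with output measured at selected time instances; the matrix with rows $CA^{t_1},\ldots,CA^{t_l}$ is the sample-based observability matrix. (For distinct nonzero $\lambda_p,\lambda_q$, the condition $\lambda_p^h=\lambda_q^h$ is equivalent to $|\lambda_p|=|\lambda_q|$ and $\pi/(\phi_q-\phi_p)=h/(2(k_q-k_p))$ for some distinct $k_p,k_q\in\{0,\ldots,h-1\}$, $\phi_i$ the phase of $\lambda_i$.) *)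

From HB Require Import structures.
From mathcomp Require Import all_boot all_order all_algebra.
From mathcomp Require Import complex reals.
Set Implicit Arguments. Unset Strict Implicit. Unset Printing Implicit Defensive.
Import Order.TTheory GRing.Theory Num.Theory.
Local Open Scope ring_scope.

(* The Jordan blocks
   are the maximal runs of consecutive indices linked by superdiagonal 1's. *)
Definition jordan_mx (F : nzRingType) (n : nat) (J : 'M[F]_n) : Prop :=
  (forall i j : 'I_n, j != i :> nat -> j != i.+1 :> nat -> J i j = 0) /\
  (forall i j : 'I_n, j = i.+1 :> nat -> (J i j = 0 \/ J i j = 1)) /\
  (forall i j : 'I_n, j = i.+1 :> nat -> J i j = 1 -> J i i = J j j).

Definition diff_jordan_blocks (F : nzRingType) (n : nat) (J : 'M[F]_n)
  (i j : 'I_n) : Prop :=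
  (i < j)%N /\ exists k k' : 'I_n,
    [/\ (i <= k)%N, (k < j)%N, k' = k.+1 :> nat & J k k' = 0].

Definition eigs_in_diff_jordan_blocks (R : rcfType) (n : nat)
  (A : 'M[R]_n) (lp lq : R[i]) : Prop :=
  exists (P J : 'M[R[i]]_n) (p q : 'I_n),
    [/\ P \in unitmx, jordan_mx J,
        map_mx (real_complex R) A = P *m J *m invmx P,
        J p p = lp /\ J q q = lq &
        (diff_jordan_blocks J p q \/ diff_jordan_blocks J q p)].

Definition sample_obs_mx (R : nzRingType) (n l : nat) (A : 'M[R]_n)
  (C : 'rV[R]_n) (t : 'I_l -> nat) : 'M[R]_(l, n) :=
  \matrix_(k < l, j < n) (C *m A ^+ t k) 0 j.

(* Through the Jordan basis, the first vectors of two distinct Jordan blocks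
   give independent eigenvectors x, y of A for eigenvalues a, b with
   a^t = b^t at every sampling time t.  Some nonzero combination z of x and y
   is killed by the single output row C, and A^t z = a^t z, so every row
   C A^t of the sample-based observability matrix annihilates z. *)

From HB Require Import structures.
From mathcomp Require Import all_boot all_order all_algebra.
From mathcomp Require Import complex reals.
Import Order.TTheory GRing.Theory Num.Theory.
Local Open Scope ring_scope.

Lemma map_mxX {aR rR : nzRingType} (f : {rmorphism aR -> rR}) {n}
    (A : 'M[aR]_n) k :
  map_mx f (A ^+ k) = map_mx f A ^+ k.
Proof.
elim: k => [|k IHk]; first by rewrite !expr0 map_mx1.
by rewrite !exprS -!mulmxE map_mxM IHk.
Qed.

Lemma eigenvectorX {R : comNzRingType} {n} {A : 'M[R]_n} {x : 'cV[R]_n} {a} k :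
  A *m x = a *: x -> A ^+ k *m x = a ^+ k *: x.
Proof.
move=> Ax; elim: k => [|k IHk]; first by rewrite !expr0 mul1mx scale1r.
by rewrite exprS -mulmxE -mulmxA IHk -scalemxAr Ax scalerA -exprSr.
Qed.

Lemma mxrank_lt_col_of_ker {F : fieldType} {m n} {M : 'M[F]_(m, n)}
    {z : 'cV[F]_n} :
  z != 0 -> M *m z = 0 -> (\rank M < n)%N.
Proof.
move=> nz_z /mulmx0_rank_max; apply: leq_trans.
by rewrite -addn1 leq_add2l lt0n mxrank_eq0.
Qed.

Lemma mxrank_sample_obs_map {aF rF : fieldType} (f : {rmorphism aF -> rF})
    {n l} (A : 'M[aF]_n) (C : 'rV[aF]_n) (t : 'I_l -> nat) :
  \rank (sample_obs_mx (map_mx f A) (map_mx f C) t)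
  = \rank (sample_obs_mx A C t).
Proof.
rewrite -(mxrank_map f); congr (\rank _); apply/matrixP => k j.
by rewrite [RHS]mxE [in RHS]mxE [LHS]mxE -map_mxX -map_mxM mxE.
Qed.

Section SampleObservability.

Context {F : fieldType} {n l : nat} {A : 'M[F]_n} {C : 'rV[F]_n}.
Context {t : 'I_l -> nat}.

Lemma row_sample_obs_mul k (z : 'cV[F]_n) :
  row k (sample_obs_mx A C t *m z) = C *m (A ^+ t k *m z).
Proof.
by rewrite row_mul mulmxA; congr (_ *m _); apply/rowP => j; rewrite !mxE.
Qed.

Lemma sample_obs_rank_lt_kerC {z : 'cV[F]_n} {mu : 'I_l -> F} :
  z != 0 -> C *m z = 0 -> (forall k, A ^+ t k *m z = mu k *: z) ->
  (\rank (sample_obs_mx A C t) < n)%N.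
Proof.
move=> nz_z Cz Az; apply: (mxrank_lt_col_of_ker nz_z).
apply/row_matrixP => k.
by rewrite row_sample_obs_mul Az -scalemxAr Cz scaler0 row0.
Qed.

Lemma sample_obs_rank_lt_eigenpair {x y : 'cV[F]_n} {a b : F} :
  A *m x = a *: x -> A *m y = b *: y ->
  (forall c d, c *: x + d *: y = 0 -> c = 0 /\ d = 0) ->
  (forall k, a ^+ t k = b ^+ t k) ->
  (\rank (sample_obs_mx A C t) < n)%N.
Proof.
move=> Ax Ay indep_xy Eab.
have Atx k := eigenvectorX (t k) Ax; have Aty k := eigenvectorX (t k) Ay.
have nz_x : x != 0.
  apply/eqP => x0; have := indep_xy 1 0.
  by rewrite x0 scaler0 scale0r addr0 => /(_ erefl) [/eqP]; rewrite oner_eq0.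
set cx := (C *m x) 0 0; set cy := (C *m y) 0 0.
have [cx0 | nz_cx] := eqVneq cx 0.
  apply: (sample_obs_rank_lt_kerC nz_x _ Atx).
  by apply/rowP => j; rewrite ord1 -/cx cx0 mxE.
apply: (@sample_obs_rank_lt_kerC (cy *: x - cx *: y) (fun k => a ^+ t k)).
- apply/eqP => z0.
  have := indep_xy cy (- cx); rewrite scaleNr => /(_ z0) [_ /eqP].
  by rewrite oppr_eq0 (negbTE nz_cx).
- rewrite mulmxBr -!scalemxAr [C *m x]mx11_scalar [C *m y]mx11_scalar -/cx -/cy.
  by rewrite !scale_scalar_mx mulrC subrr.
- move=> k; rewrite mulmxBr -!scalemxAr Atx Aty Eab.
  by rewrite scalerBr !scalerA mulrC [_ * cx]mulrC -Eab.
Qed.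

End SampleObservability.

Definition jordan_block_head {F : nzRingType} {n} (J : 'M[F]_n) (s : 'I_n) :=
  forall j : 'I_n, j.+1 = s :> nat -> J j s = 0.

Section JordanBlocks.

Context {F : nzRingType} {n : nat} {J : 'M[F]_n}.
Hypothesis jordanJ : jordan_mx J.

Lemma exists_jordan_block_head (i : 'I_n) : exists s : 'I_n,
  [/\ (s <= i)%N, jordan_block_head J s, J s s = J i i &
      forall k k' : 'I_n, (s <= k < i)%N -> k' = k.+1 :> nat -> J k k' = 1].
Proof.
have [_ [J01 J1E]] := jordanJ.
move Ei: (val i) => m; elim: m i Ei => [|m IHm] i Ei.
  exists i; split=> //; first by rewrite Ei.
  - by move=> j; rewrite Ei.
  - by move=> k k'; rewrite ltn0 andbF.
have lt_mn : (m < n)%N by move: (ltn_ord i); rewrite Ei => /ltnW.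
pose j := Ordinal lt_mn.
have [Jji0 | Jji1] := J01 j i Ei.
  exists i; split=> //; first by rewrite Ei.
  - move=> j' Ej'; suff -> : j' = j by [].
    by apply/val_inj/succn_inj; rewrite Ej' Ei.
  - by move=> k k'; rewrite -Ei [(i <= k)%N]leqNgt andNb.
have [s [le_sm head_s Jss link_s]] := IHm j erefl.
exists s; split=> //; first exact: leqW.
  by rewrite Jss (J1E j i Ei Jji1).
move=> k k' /andP[le_sk]; rewrite ltnS leq_eqVlt => /predU1P[Ekm | lt_km] Ek'.
  have -> : k' = i by apply/val_inj => /=; rewrite Ek' Ekm Ei.
  by have -> : k = j by apply: val_inj.
by apply: link_s => //; rewrite le_sk.
Qed.

Lemma jordan_block_head_eigen (s : 'I_n) : jordan_block_head J s ->
  J *m delta_mx s 0 = J s s *: delta_mx s (0 : 'I_1).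
Proof.
have [J0 _] := jordanJ; move=> head_s.
apply/colP => a; rewrite -colE !mxE eqxx andbT.
have [-> | ne_as] := eqVneq a s; first by rewrite mulr1.
rewrite mulr0; have [Eas | ne_a1s] := eqVneq a.+1 (s : nat); first exact: head_s.
by apply: J0; rewrite eq_sym.
Qed.

Lemma diff_jordan_blocks_heads (i j : 'I_n) : diff_jordan_blocks J i j ->
  exists s1 s2 : 'I_n, [/\ s1 != s2, jordan_block_head J s1,
    jordan_block_head J s2, J s1 s1 = J i i & J s2 s2 = J j j].
Proof.
case=> _ [k [k' [le_ik lt_kj Ek' Jkk']]].
have [s1 [le_s1i head1 J11 _]] := exists_jordan_block_head i.
have [s2 [_ head2 J22 link2]] := exists_jordan_block_head j.
exists s1, s2; split=> //.
have lt_ks2 : (k < s2)%N.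
  rewrite ltnNge; apply/negP => le_s2k.
  have := link2 k k'; rewrite le_s2k lt_kj Jkk' => /(_ erefl Ek') /eqP.
  by rewrite eq_sym oner_eq0.
by apply/eqP => Es; move: lt_ks2; rewrite -Es ltnNge (leq_trans le_s1i le_ik).
Qed.

End JordanBlocks.

Lemma sample_obs_rank_lt_jordan {F : fieldType} {n l} {A : 'M[F]_n}
    {C : 'rV[F]_n} {t : 'I_l -> nat} {P J : 'M[F]_n} {s1 s2 : 'I_n} :
  P \in unitmx -> jordan_mx J -> A = P *m J *m invmx P -> s1 != s2 ->
  jordan_block_head J s1 -> jordan_block_head J s2 ->
  (forall k, J s1 s1 ^+ t k = J s2 s2 ^+ t k) ->
  (\rank (sample_obs_mx A C t) < n)%N.
Proof.
move=> unitP jordanJ defA ne_s12 head1 head2.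
have eigen s : jordan_block_head J s ->
    A *m (P *m delta_mx s 0) = J s s *: (P *m delta_mx s (0 : 'I_1)).
  move=> head_s; rewrite defA -!mulmxA mulKmx //.
  by rewrite jordan_block_head_eigen // scalemxAr.
apply: (sample_obs_rank_lt_eigenpair (eigen _ head1) (eigen _ head2)).
move=> c d; rewrite !scalemxAr -mulmxDr => /(congr1 (mulmx (invmx P))).
rewrite mulKmx // mulmx0 => /colP cd0.
have := cd0 s1; have := cd0 s2; rewrite !mxE !eqxx eq_sym (negbTE ne_s12) /=.
by rewrite !mulr0 !mulr1 add0r addr0 => -> ->.
Qed.

Theorem lemma2 (R : realType) (n : nat) (A : 'M[R]_n) (C : 'rV[R]_n)
  (lp lq : R[i]) (h : nat) :
  eigs_in_diff_jordan_blocks A lp lq -> (0 < h)%N -> lp ^+ h = lq ^+ h ->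
  forall (l : nat) (r : 'I_l -> nat), (forall k, 0 < r k)%N ->
  (\rank (sample_obs_mx A C (fun k => r k * h)%N) < n)%N.
Proof.
case=> P [J [p [q [unitP jordanJ defA [Jpp Jqq] diff_pq]]]] _ Eh l r _.
rewrite -(mxrank_sample_obs_map (real_complex R)).
have [s1 [s2 [ne_s12 head1 head2 Eh12]]] : exists s1 s2 : 'I_n,
    [/\ s1 != s2, jordan_block_head J s1, jordan_block_head J s2
      & J s1 s1 ^+ h = J s2 s2 ^+ h].
  case: diff_pq => /(diff_jordan_blocks_heads jordanJ)
    [s1 [s2 [ne_s12 head1 head2 E1 E2]]].
  - by exists s1, s2; rewrite E1 E2 Jpp Jqq Eh.
  - by exists s2, s1; rewrite E1 E2 Jpp Jqq Eh eq_sym.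
apply: (sample_obs_rank_lt_jordan unitP jordanJ defA ne_s12 head1 head2) => k.
by rewrite mulnC !exprM Eh12.
Qed.
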